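(* Let $(S,\cdot)$ be a discrete semigroup, let $\mathcal{F}$ be a filter on $S$ such that $\overline{\mathcal{F}}$ is a subsemigroup of $\beta S$, and let $(X,\langle T_s\rangle_{s\in S})$ be a dynamical system. Then $x,y\in X$ are $\mathcal{F}$-proximal if and only if there is some $p\in\overline{\mathcal{F}}$ such that $T_p(x)=T_p(y)$.
   Context: $\beta S$ is the Stone–Čech compactification of $S$ (ultrafilters on $S$) with the extended operation making it a compact right topological semigroup ($A\in pq$ iff $\{x\in S:x^{-1}A\in q\}\in p$). $\overline{\mathcal{F}}=\bigcap_{F\in\mathcal{F}}\overline{F}$ is the set of ultrafilters containing $\mathcal{F}$. A dynamical system $(X,\langle T_s\rangle_{s\in S})$: $X$ compact Hausdorff, each $T_s:X\to X$ continuous, $T_s\circ T_t=T_{st}$. For $p\in\beta S$, $T_p:X\to X$ is defined by $T_p(x)=p\text{-}\lim_{s\in S}T_s(x)$ (equivalently $T_p=\tilde\theta(p)$, where $\tilde\theta$ is the continuous extension to $\beta S$ of $s\mapsto T_s\in X^X$); one has $T_p\circ T_q=T_{pq}$. Points $x,y\in X$ are $\mathcal{F}$-proximal if for every neighbourhood $U$ of the diagonal in $X\times X$ and every $F\in\mathcal{F}$ there is $s\in F$ with $(T_s(x),T_s(y))\in U$. *)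

From HB Require Import structures.
From mathcomp Require Import all_boot.
From mathcomp Require Import boolp classical_sets filter topology.
Set Implicit Arguments. Unset Strict Implicit. Unset Printing Implicit Defensive.
Local Open Scope classical_set_scope.

Definition linv {S : Type} (op : S -> S -> S) (x : S) (A : set S) : set S :=
  [set y | A (op x y)].

Definition ultra_mul {S : Type} (op : S -> S -> S) (p q : set_system S)
  : set_system S := [set A | p [set x | q (linv op x A)]].

Definition Fbar {S : Type} (F : set_system S) : set (set_system S) :=
  [set p | UltraFilter p /\ F `<=` p].

Definition Fbar_subsemigroup {S : Type} (op : S -> S -> S) (F : set_system S) :=
  Fbar F !=set0 /\
  forall p q, Fbar F p -> Fbar F q -> Fbar F (ultra_mul op p q).

Definition dynamical_system {S : Type} (op : S -> S -> S) (X : topologicalType)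
  (T : S -> X -> X) :=
  [/\ compact [set: X], hausdorff_space X,
      (forall s, continuous (T s)) &
      (forall s t, T s \o T t = T (op s t))].

(* T_p(x) = p-lim_{s} T_s(x): the (chosen) limit of the image filter
   (fun s => T s x) @ p; it exists and is unique when X is compact Hausdorff
   and p is an ultrafilter.  (x is only a dummy default for the choice.) *)
Definition Tp {S : Type} {X : topologicalType} (T : S -> X -> X)
  (p : set_system S) (x : X) : X :=
  xget x [set l : X | (fun s => T s x) @ p --> l].

Definition diag_nbhs {X : topologicalType} (U : set (X * X)) :=
  exists V : set (X * X), [/\ open V, (forall x : X, V (x, x)) & V `<=` U].

Definition F_proximal {S : Type} {X : topologicalType} (T : S -> X -> X)
  (F : set_system S) (x y : X) :=
  forall U : set (X * X), diag_nbhs U ->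
  forall A, F A -> exists2 s, A s & U (T s x, T s y).

From mathcomp Require Import all_boot.
From mathcomp Require Import boolp classical_sets filter topology.
Local Open Scope classical_set_scope.

(* If T_p x = T_p y = z, then for every neighbourhood U of the diagonal the
   pairs (T_s x, T_s y) lie p-almost surely in a product neighbourhood of
   (z, z) inside U, and p meets every member of F.  Conversely, proximality
   says exactly that the sets {s in A | (T_s x, T_s y) in U}, for A in F and U
   a neighbourhood of the diagonal, form a proper filter base; any ultrafilter
   p refining it contains F, and T_p x = T_p y because in a
   compact Hausdorff (hence regular) space two distinct points have
   neighbourhoods with disjoint closures, whose product is avoided by some
   neighbourhood of the diagonal. *)

Section DiagonalNeighbourhoods.
Context {X : topologicalType}.

Lemma diag_nbhsT : diag_nbhs [set: X * X].
Proof. by exists setT; split => //; exact: openT. Qed.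

Lemma diag_nbhsI (U V : set (X * X)) :
  diag_nbhs U -> diag_nbhs V -> diag_nbhs (U `&` V).
Proof.
move=> [U' [oU' dU' sU']] [V' [oV' dV' sV']].
exists (U' `&` V'); split; [exact: openI | by [] |].
by move=> w [/sU' ? /sV' ?].
Qed.

Lemma diag_nbhs_nbhs (z : X) (U : set (X * X)) : diag_nbhs U -> nbhs (z, z) U.
Proof.
move=> [V [oV dV sVU]]; apply: filterS sVU _.
by move: oV; rewrite openE; apply.
Qed.

Lemma diag_nbhs_setCX (A B : set X) : closed A -> closed B ->
  A `&` B = set0 -> diag_nbhs (~` (A `*` B)).
Proof.
move=> cA cB AB0; exists (~` (A `*` B)); split => //.
- have -> : ~` (A `*` B) = fst @^-1` (~` A) `|` snd @^-1` (~` B).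
    by apply/seteqP; split => -[u v] /=; [move/not_andP | move=> /not_andP].
  apply: openU; apply: open_comp; rewrite ?openC //.
  + by move=> [u v] _; exact: cvg_fst.
  + by move=> [u v] _; exact: cvg_snd.
- by move=> z [Az Bz]; have : (A `&` B) z by []; rewrite AB0.
Qed.

End DiagonalNeighbourhoods.

Section LimitsAlongFilters.
Context {S : Type} {X : topologicalType}.

Lemma ultra_cvg_compact (f : S -> X) (p : set_system S) :
  compact [set: X] -> UltraFilter p -> exists l : X, f @ p --> l.
Proof.
move=> cX up.
have [l [_ cl]] := cX (f @ p) _ (filterT : (f @ p) setT).
exists l => N Nl.
have [//|pNC] := in_ultra_setVsetC (f @^-1` N) up.
by have [z [] /=] := cl (~` N) N pNC Nl.
Qed.

Lemma Tp_cvg (T : S -> X -> X) (p : set_system S) (x : X) :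
  compact [set: X] -> UltraFilter p -> (fun s => T s x) @ p --> Tp T p x.
Proof.
move=> cX up.
by apply: (@xgetPex _ x [set l | (fun s => T s x) @ p --> l]); exact: ultra_cvg_compact.
Qed.

Lemma cvg_diag_nbhs {p : set_system S} {pF : Filter p} {f g : S -> X} {z : X}
    {U : set (X * X)} :
  f @ p --> z -> g @ p --> z -> diag_nbhs U -> p [set s | U (f s, g s)].
Proof.
move=> fz gz /(diag_nbhs_nbhs z) [[P Q] /= [Pz Qz] sPQU].
have pP : p (f @^-1` P) := fz _ Pz; have pQ : p (g @^-1` Q) := gz _ Qz.
by apply: filterS (filterI pP pQ) => s [Pfs Qgs]; exact: sPQU.
Qed.

Lemma cvg_diag_eq {p : set_system S} {pF : ProperFilter p} {f g : S -> X}
    {a b : X} :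
  compact [set: X] -> hausdorff_space X ->
  f @ p --> a -> g @ p --> b ->
  (forall U, diag_nbhs U -> p [set s | U (f s, g s)]) -> a = b.
Proof.
move=> cX hX fa gb diag_ev; apply: (hX) => A B Aa Bb.
have [A' A'a cA'A] := @compact_regular _ a _ hX cX filterT _ Aa.
have [B' B'b cB'B] := @compact_regular _ b _ hX cX filterT _ Bb.
suff [z [Az Bz]] : closure A' `&` closure B' !=set0.
  by exists z; split; [exact: cA'A | exact: cB'B].
apply/set0P/eqP => AB0.
have dU : diag_nbhs (~` (closure A' `*` closure B')).
  by apply: diag_nbhs_setCX AB0; exact: closed_closure.
have pA' : p (f @^-1` A') := fa _ A'a; have pB' : p (g @^-1` B') := gb _ B'b.
have [s [[Us A's] B's]] := filter_ex (filterI (filterI (diag_ev _ dU) pA') pB').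
by apply: Us; split; apply: subset_closure.
Qed.

End LimitsAlongFilters.

Section ProximalFilter.
Context {S : Type} {X : topologicalType} (T : S -> X -> X).
Context (F : set_system S) {FF : Filter F} (x y : X).

Definition proximal_filter : set_system S :=
  filter_from [set UA : set (X * X) * set S | diag_nbhs UA.1 /\ F UA.2]
    (fun UA => [set s | UA.2 s /\ UA.1 (T s x, T s y)]).

Lemma proximal_filter_proper :
  F_proximal T F x y -> ProperFilter proximal_filter.
Proof.
move=> prox; apply: filter_from_proper.
  apply: filter_from_filter.
    by exists (setT, setT); split; [exact: diag_nbhsT | exact: filterT].
  move=> [U1 A1] [U2 A2] [dU1 FA1] [dU2 FA2].
  exists (U1 `&` U2, A1 `&` A2); first by split; [exact: diag_nbhsI | exact: filterI].
  by move=> s [[? ?] [? ?]].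
by move=> [U A] [dU FA]; have [s As Us] := prox U dU A FA; exists s.
Qed.

Lemma proximal_filter_ge A : F A -> proximal_filter A.
Proof. by move=> FA; exists (setT, A) => [|s []//]; split=> //; exact: diag_nbhsT. Qed.

Lemma proximal_filter_diag U :
  diag_nbhs U -> proximal_filter [set s | U (T s x, T s y)].
Proof. by move=> dU; exists (U, setT) => [|s []//]; split=> //; exact: filterT. Qed.

End ProximalFilter.

Theorem lemma10 (S : Type) (op : S -> S -> S)
  (op_assoc : forall a b c, op a (op b c) = op (op a b) c)
  (F : set_system S) (F_filter : ProperFilter F)
  (hF : Fbar_subsemigroup op F)
  (X : topologicalType) (T : S -> X -> X) (hT : dynamical_system op T)
  (x y : X) :
  F_proximal T F x y <-> exists2 p, Fbar F p & Tp T p x = Tp T p y.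
Proof.
case: hT => cX hX _ _; split.
- move=> /proximal_filter_proper /ultraFilterLemma [p [up sub]].
  exists p; first by split=> // A /(proximal_filter_ge T F x y) /sub.
  apply: (cvg_diag_eq cX hX (Tp_cvg T p x cX up) (Tp_cvg T p y cX up)).
  by move=> U /(proximal_filter_diag T F x y) /sub.
- move=> [p [up Fp] Txy] U dU A FA.
  have cvg_y := Tp_cvg T p y cX up; rewrite -Txy in cvg_y.
  have pU : p [set s | U (T s x, T s y)].
    exact: cvg_diag_nbhs (Tp_cvg T p x cX up) cvg_y dU.
  by have [s [As Us]] := @filter_ex _ p _ _ (filterI (Fp _ FA) pU); exists s.
Qed.
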